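(* Let $0<\mu\le L$ and $\frac{25\mu}{(12L-\mu)^2}\le s\le\frac{1}{4L}$. For $\beta\in[0,1]$ define $$A_\beta=\frac{1}{(1-\sqrt{\mu s})^2}\left[1-2Ls\cdot\frac{(\beta-\beta^2)\mu s+(3+\beta^2-2\beta)\sqrt{\mu s}+2-2\beta}{2\sqrt{\mu s}}\right],\qquad B_\beta=\frac{1}{1-\sqrt{\mu s}}+\frac{\beta^2Ls}{2}.$$ Then there exists $\beta_c\in[0,1]$, depending on $\mu,s,L$, such that $\frac{A_\beta}{B_\beta}\le\frac16$ for $0\le\beta\le\beta_c$ and $\frac{A_\beta}{B_\beta}>\frac16$ for $\beta_c<\beta\le1$. *)

From Stdlib Require Import Reals.
Open Scope R_scope.

Definition A_beta (mu L s beta : R) : R :=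
  / (1 - sqrt (mu * s)) ^ 2 *
  (1 - 2 * L * s *
       (((beta - beta ^ 2) * mu * s + (3 + beta ^ 2 - 2 * beta) * sqrt (mu * s)
         + 2 - 2 * beta) / (2 * sqrt (mu * s)))).

Definition B_beta (mu L s beta : R) : R :=
  / (1 - sqrt (mu * s)) + beta ^ 2 * L * s / 2.

(** With [t = sqrt (mu s)] and [x = L s], the inequality [A_beta / B_beta <= 1/6]
    is equivalent to [6 A_beta - B_beta <= 0], and [6 A_beta - B_beta] is a
    quadratic polynomial in [beta] that is strictly increasing on [0, 1] as soon
    as [0 < t < 1] and [x > 0].  The lower bound on [s] says exactly that
    [12 L s - mu s >= 5 sqrt (mu s)], which makes this polynomial nonpositive at
    [beta = 0]; the threshold [beta_c] is then its root in [[0, 1]], or [1] if it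
    has none there. *)

From Stdlib Require Import Reals Lra Psatz.
Open Scope R_scope.

Lemma increasing_sign_threshold (f : R -> R) (a b : R) :
  a <= b -> continuity f -> f a <= 0 ->
  (forall y z, a <= y -> y < z -> z <= b -> f y < f z) ->
  exists c, a <= c <= b /\
    (forall y, a <= y <= c -> f y <= 0) /\
    (forall y, c < y <= b -> 0 < f y).
Proof.
  intros Hab Hf Hfa Hmono.
  destruct (Rle_dec (f b) 0) as [Hfb | Hfb].
  - exists b; split; [lra |]; split; [| intros; lra].
    intros y Hy; destruct (Req_dec y b) as [-> | Hyb]; [lra |].
    assert (f y < f b) by (apply Hmono; lra); lra.
  - apply Rnot_le_lt in Hfb.
    destruct (IVT_cor f a b Hf Hab) as [c [Hc Hfc]]; [nra |].
    exists c; split; [exact Hc |]; split.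
    + intros y Hy; destruct (Req_dec y c) as [-> | Hyc]; [lra |].
      assert (f y < f c) by (apply Hmono; lra); lra.
    + intros y Hy; assert (f c < f y) by (apply Hmono; lra); lra.
Qed.

Lemma div_le_sixth_iff (a b : R) : 0 < b -> (a / b <= 1 / 6 <-> 6 * a - b <= 0).
Proof.
  intro Hb; assert (Ha : a = a / b * b) by (field; lra).
  split; intro H; [rewrite Ha; nra |].
  apply Rnot_lt_le; intro Hlt; rewrite Ha in H; nra.
Qed.

Definition excess (t x beta : R) : R :=
  6 / (1 - t) ^ 2
  - 6 * x * ((beta - beta ^ 2) * t ^ 2 + (3 + beta ^ 2 - 2 * beta) * t + 2 - 2 * beta)
      / (t * (1 - t) ^ 2)
  - 1 / (1 - t) - beta ^ 2 * x / 2.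

Lemma six_A_beta_sub_B_beta (mu L s beta : R) :
  0 < mu * s -> sqrt (mu * s) <> 1 ->
  6 * A_beta mu L s beta - B_beta mu L s beta = excess (sqrt (mu * s)) (L * s) beta.
Proof.
  intros Hms Ht1.
  assert (Ht2 : sqrt (mu * s) ^ 2 = mu * s) by (apply pow2_sqrt; lra).
  assert (Ht0 : 0 < sqrt (mu * s)) by (apply sqrt_lt_R0; lra).
  unfold A_beta, B_beta, excess; set (t := sqrt (mu * s)) in *.
  replace ((beta - beta ^ 2) * mu * s) with ((beta - beta ^ 2) * t ^ 2) by (rewrite Ht2; ring).
  clearbody t; field; split; [lra |]; intro H; apply Ht1; lra.
Qed.

Lemma B_beta_pos (mu L s beta : R) :
  0 <= L * s -> sqrt (mu * s) < 1 -> 0 < B_beta mu L s beta.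
Proof.
  intros Hx Ht; unfold B_beta.
  assert (0 < / (1 - sqrt (mu * s))) by (apply Rinv_0_lt_compat; lra).
  assert (0 <= beta ^ 2) by apply pow2_ge_0.
  assert (0 <= beta ^ 2 * L * s / 2) by nra; lra.
Qed.

Lemma excess_sub (t x b1 b2 : R) : 0 < t -> t <> 1 ->
  excess t x b2 - excess t x b1 =
  (b2 - b1) * x *
  (6 * (2 + 2 * t - t ^ 2 - (b1 + b2) * (t - t ^ 2)) / (t * (1 - t) ^ 2) - (b1 + b2) / 2).
Proof. intros Ht0 Ht1; unfold excess; field; split; lra. Qed.

Lemma excess_increasing (t x b1 b2 : R) :
  0 < t < 1 -> 0 < x -> 0 <= b1 -> b1 < b2 -> b2 <= 1 ->
  excess t x b1 < excess t x b2.
Proof.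
  intros Ht Hx H1 H12 H2.
  set (K := 2 + 2 * t - t ^ 2 - (b1 + b2) * (t - t ^ 2)).
  set (d := t * (1 - t) ^ 2).
  assert (0 <= (2 - (b1 + b2)) * (t - t ^ 2)) by (apply Rmult_le_pos; nra).
  assert (HK : 2 <= K) by (unfold K; nra).
  assert (Hd : 0 < d < 1) by (unfold d; split; [apply Rmult_lt_0_compat |]; nra).
  assert (Hq : 12 <= 6 * K / d).
  { apply Rmult_le_reg_r with d; [lra |]; unfold Rdiv.
    rewrite Rmult_assoc, Rinv_l; nra. }
  assert (0 < (b2 - b1) * x * (6 * K / d - (b1 + b2) / 2)).
  { apply Rmult_lt_0_compat; [apply Rmult_lt_0_compat |]; lra. }
  assert (excess t x b2 - excess t x b1 = (b2 - b1) * x * (6 * K / d - (b1 + b2) / 2))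
    by (apply excess_sub; lra).
  lra.
Qed.

Lemma excess_continuous (t x : R) : continuity (excess t x).
Proof. unfold excess; reg. Qed.

Lemma excess_at_0_nonpos (t x : R) :
  0 < t < 1 -> 0 <= x -> 5 * t + t ^ 2 <= 12 * x -> excess t x 0 <= 0.
Proof.
  intros Ht Hx Hbound.
  assert (E : excess t x 0 = (5 * t + t ^ 2 - 12 * x - 18 * x * t) / (t * (1 - t) ^ 2)).
  { unfold excess; field; split; lra. }
  assert (0 < / (t * (1 - t) ^ 2)) by (apply Rinv_0_lt_compat, Rmult_lt_0_compat; nra).
  assert (5 * t + t ^ 2 - 12 * x - 18 * x * t <= 0) by nra.
  rewrite E; unfold Rdiv; nra.
Qed.

Lemma step_size_bounds (mu L s : R) :
  0 < mu -> mu <= L -> 25 * mu / (12 * L - mu) ^ 2 <= s -> s <= 1 / (4 * L) ->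
  0 < s /\ L * s <= 1 / 4 /\ 5 * sqrt (mu * s) <= 12 * (L * s) - mu * s.
Proof.
  intros Hmu HmL Hs1 Hs2.
  assert (Hc : 0 < (12 * L - mu) ^ 2) by (apply pow_lt; lra).
  assert (Hlow : 25 * mu <= s * (12 * L - mu) ^ 2).
  { apply Rmult_le_compat_r with (r := (12 * L - mu) ^ 2) in Hs1; [| lra].
    unfold Rdiv in Hs1; rewrite Rmult_assoc, Rinv_l in Hs1; lra. }
  assert (Hs : 0 < s) by nra.
  assert (Hup : 4 * L * s <= 1).
  { apply Rmult_le_compat_l with (r := 4 * L) in Hs2; [| lra].
    unfold Rdiv in Hs2; rewrite Rmult_1_l, Rinv_r in Hs2; lra. }
  assert (Ht2 : sqrt (mu * s) ^ 2 = mu * s) by (apply pow2_sqrt; nra).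
  assert (Ht0 : 0 <= sqrt (mu * s)) by apply sqrt_pos.
  assert (Ha : 0 <= s * (12 * L - mu)) by nra.
  (* multiply [Hlow] by [s]: [(s (12 L - mu))^2 >= 25 mu s = (5 sqrt (mu s))^2] *)
  assert (Hsq : (5 * sqrt (mu * s)) ^ 2 <= (s * (12 * L - mu)) ^ 2) by nra.
  repeat split; [lra | lra |].
  replace (12 * (L * s) - mu * s) with (s * (12 * L - mu)) by ring.
  apply Rnot_lt_le; intro Hlt; nra.
Qed.

Theorem lemma5p6 (mu L s : R) :
  0 < mu -> mu <= L ->
  25 * mu / (12 * L - mu) ^ 2 <= s -> s <= 1 / (4 * L) ->
  exists beta_c : R, 0 <= beta_c <= 1 /\
    (forall beta, 0 <= beta <= beta_c ->
       A_beta mu L s beta / B_beta mu L s beta <= 1 / 6) /\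
    (forall beta, beta_c < beta <= 1 ->
       A_beta mu L s beta / B_beta mu L s beta > 1 / 6).
Proof.
  intros Hmu HmL Hs1 Hs2.
  destruct (step_size_bounds mu L s Hmu HmL Hs1 Hs2) as (Hs & Hx & Hlow).
  set (t := sqrt (mu * s)) in *; set (x := L * s) in *.
  assert (Ht2 : t ^ 2 = mu * s) by (apply pow2_sqrt; nra).
  assert (Ht : 0 < t < 1) by (split; [apply sqrt_lt_R0 |]; nra).
  assert (Hsign : forall beta, A_beta mu L s beta / B_beta mu L s beta <= 1 / 6
                               <-> excess t x beta <= 0).
  { intro beta; rewrite div_le_sixth_iff by (apply B_beta_pos; fold t x; nra).
    rewrite six_A_beta_sub_B_beta by (fold t; nra); reflexivity. }
  destruct (increasing_sign_threshold (excess t x) 0 1) as (c & Hc & Hle & Hgt).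
  - lra.
  - apply excess_continuous.
  - apply excess_at_0_nonpos; nra.
  - intros; apply excess_increasing; nra.
  - exists c; split; [exact Hc |]; split.
    + intros beta Hb; apply Hsign, Hle, Hb.
    + intros beta Hb; apply Rnot_le_lt; rewrite Hsign; apply Rlt_not_le, Hgt, Hb.
Qed.
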